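(* Let $\Sigma$ be a finite totally ordered alphabet, let $W = a_1\cdots a_n \in \Sigma^+$ have Lyndon factorization $W = L_1 L_2 \cdots L_k$, and let $1 \le l < k$, $m = |L_1 \cdots L_l|$. Let $sort(L_1\cdots L_l)$ be the list of positions $1,\dots,m$ sorted by the lexicographic order of the suffixes $W[i,m]$ of $L_1\cdots L_l$, let $sort(L_{l+1}\cdots L_k)$ be the list of positions $m+1,\dots,n$ sorted by the lexicographic order of the suffixes $W[i,n]$ of $L_{l+1}\cdots L_k$, and let $sort(L_1\cdots L_k)$ be the list of positions $1,\dots,n$ sorted by the lexicographic order of the suffixes $W[i,n]$ of $W$. Then $sort(L_1 \cdots L_k) = merge(sort(L_1\cdots L_l), sort(L_{l+1}\cdots L_k))$, where the merge compares positions by the lexicographic order of the corresponding suffixes of $W$.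
   Context: $W[i,j] = a_i \cdots a_j$. The lexicographic order is the usual one, with a proper prefix smaller than the longer word. A Lyndon word is a nonempty primitive word strictly smaller than all its other cyclic shifts (conjugates). The Lyndon factorization of $W$ is the unique factorization $W = L_1\cdots L_k$ into Lyndon words with $L_1 \ge \cdots \ge L_k$ lexicographically. If $l_1, l_2$ are two sorted lists of elements of a totally ordered set, $merge(l_1,l_2)$ is the sorted list of all elements of $l_1$ and $l_2$. *)

From mathcomp Require Import all_boot all_order.
Set Implicit Arguments. Unset Strict Implicit. Unset Printing Implicit Defensive.
Import Order.TTheory.
Local Open Scope order_scope.

Section Words.
Context {d : Order.disp_t} {T : finOrderType d}.

Fixpoint lexle (s t : seq T) : bool :=
  match s, t with
  | [::], _ => true
  | _ :: _, [::] => false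
  | x :: s', y :: t' => (x < y) || ((x == y) && lexle s' t')
  end.

Definition lexlt (s t : seq T) : bool := lexle s t && (s != t).

(* Lyndon word: nonempty, strictly smaller than all its other cyclic shifts
   (rot i w for 0 < i < |w|); this also forces primitivity. *)
Definition lyndon (w : seq T) : bool :=
  (0 < size w)%N && [forall i : 'I_(size w), (0 < i)%N ==> lexlt w (rot i w)].

Definition lyndon_factorization (W : seq T) (fs : seq (seq T)) : Prop :=
  [/\ flatten fs = W, all lyndon fs &
      forall j, (j.+1 < size fs)%N -> lexle (nth [::] fs j.+1) (nth [::] fs j)].

(* W[i,j] = a_i ... a_j with 1-based positions *)
Definition subword (W : seq T) (i j : nat) : seq T := drop i.-1 (take j W).

Definition sort_suffixes (W : seq T) (lo hi : nat) : seq nat :=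
  sort (fun i j => lexle (subword W i hi) (subword W j hi)) (iota lo (hi.+1 - lo)).

End Words.

(* Write W = U V with U = L_1...L_l and V = L_{l+1}...L_k.  A proper suffix
   of a Lyndon word L exceeds L at some letter, and a concatenation Z of words
   that are all <= L satisfies Z <= L Z; by induction along the nonincreasing
   factors, V <= s V for every suffix s of U.  Hence comparing two suffixes s V
   and s' V of W agrees with comparing s and s': either they differ at a letter,
   or one is a prefix of the other, say s' = s r, and then s V <= s r V reduces
   to V <= r V.  So both lists are sorted for the order on suffixes of W, and so
   is their merge; a sorted permutation of the positions is unique, because
   suffixes at distinct positions have distinct lengths. *)

From mathcomp Require Import all_boot all_order zify.
Import Order.TTheory.
Set Implicit Arguments. Unset Strict Implicit. Unset Printing Implicit Defensive.

Section Lexicographic.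
Context {d : Order.disp_t} {T : finOrderType d}.
Local Open Scope order_scope.
Implicit Types s t u v p r x y L U V W : seq T.
Implicit Types Ms gs hs : seq (seq T).

Lemma lexle_refl s : lexle s s.
Proof. by elim: s => //= x s ->; rewrite eqxx orbT. Qed.

Lemma lexle_trans s t u : lexle s t -> lexle t u -> lexle s u.
Proof.
elim: s t u => [//|x s IH] [|y t] [|z u] //=.
move=> /orP[xy|/andP[/eqP-> st]] /orP[yz|/andP[/eqP<- tu]].
- by rewrite (lt_trans xy yz).
- by rewrite xy.
- by rewrite yz.
- by rewrite eqxx (IH _ _ st tu) orbT.
Qed.

Lemma lexle_total s t : lexle s t || lexle t s.
Proof.
elim: s t => [//|x s IH] [|y t] //=.
by case: (ltgtP x y) => //= ->; rewrite eqxx /= IH.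
Qed.

Lemma lexle_anti s t : lexle s t -> lexle t s -> s = t.
Proof.
elim: s t => [|x s IH] [|y t] //=.
move=> /orP[xy|/andP[/eqP-> st]] /orP[yx|/andP[/eqP yx ts]].
- by move: (lt_trans xy yx); rewrite ltxx.
- by move: xy; rewrite yx ltxx.
- by move: yx; rewrite ltxx.
- by rewrite (IH _ st ts).
Qed.

Lemma lexle_catl p s t : lexle (p ++ s) (p ++ t) = lexle s t.
Proof. by elim: p => //= x p ->; rewrite ltxx eqxx. Qed.

(* [s] is smaller than [t] at their first differing letter, so that the
   comparison survives arbitrary right extensions of both words. *)
Definition mismatch_lt s t := exists p a b u v,
  [/\ s = p ++ a :: u, t = p ++ b :: v & a < b].

Lemma mismatch_lt_cat s t s' t' :
  mismatch_lt s t -> mismatch_lt (s ++ s') (t ++ t').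
Proof.
case=> p [a [b [u [v [-> -> ab]]]]].
by exists p, a, b, (u ++ s'), (v ++ t'); rewrite -!catA.
Qed.

Lemma mismatch_lt_lexle s t : mismatch_lt s t -> lexle s t.
Proof. by case=> p [a [b [u [v [-> -> ab]]]]]; rewrite lexle_catl /= ab. Qed.

Lemma mismatch_lt_nlexle s t : mismatch_lt s t -> ~~ lexle t s.
Proof.
case=> p [a [b [u [v [-> -> ab]]]]].
by rewrite lexle_catl /= negb_or negb_and lt_gtF //= gt_eqF.
Qed.

Lemma lexle_prefix_or_mismatch s t :
  lexle s t -> (exists r, t = s ++ r) \/ mismatch_lt s t.
Proof.
elim: s t => [|x s IH] t; first by left; exists t.
case: t => [|y t] //= /orP[xy|/andP[/eqP-> st]].
  by right; exists [::], x, y, s, t.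
case: (IH _ st) => [[r ->]|[p [a [b [u [v [-> -> ab]]]]]]].
  by left; exists r.
by right; exists (y :: p), a, b, u, v.
Qed.

Lemma lexle_mismatch_or_eq s t :
  lexle s t -> (size t <= size s)%N -> s = t \/ mismatch_lt s t.
Proof.
move=> /lexle_prefix_or_mismatch[[r ->]|]; last by right.
by rewrite size_cat -[X in (_ <= X)%N]addn0 leq_add2l leqn0 size_eq0 => /eqP->;
  left; rewrite cats0.
Qed.

Lemma lyndon_lt_rot L i : lyndon L -> (0 < i < size L)%N -> lexlt L (rot i L).
Proof.
case/andP=> _ /forallP rotL /andP[i0 iL].
by have /implyP := rotL (Ordinal iL); apply.
Qed.

Lemma lyndon_mismatch_drop L i :
  lyndon L -> (0 < i < size L)%N -> mismatch_lt L (drop i L).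
Proof.
move=> lynL iL; have /andP[le ne] := lyndon_lt_rot lynL iL.
move: le ne; rewrite /rot; set t := drop i L; set p := take i L => le ne.
have size_t : size t = (size L - i)%N by rewrite size_drop.
have [Lt|tL] := orP (lexle_total L t).
  case: (lexle_mismatch_or_eq Lt) => [|eqLt|//]; first by rewrite size_t leq_subr.
  by move: (congr1 size eqLt); rewrite size_t; lia.
case: (lexle_prefix_or_mismatch tL) => [[r Ltr]|mm]; last first.
  by case/negP: (mismatch_lt_nlexle (mismatch_lt_cat p [::] mm)); rewrite cats0.
have size_r : size r = size p.
  have Lpt : L = p ++ t by rewrite cat_take_drop.
  by move: (congr1 size Ltr) (congr1 size Lpt); rewrite !size_cat; lia.
have rp : lexle r p by move: le; rewrite {1}Ltr lexle_catl.
case: (lexle_mismatch_or_eq rp) => [|erp|mm]; first by rewrite size_r.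
  by case/negP: ne; rewrite {1}Ltr erp.
have tL' : (0 < size t < size L)%N by rewrite size_t; lia.
have /andP[+ _] := lyndon_lt_rot lynL tL'.
rewrite {2}Ltr rot_size_cat -{1}(cat_take_drop i L) -/p -/t.
by move/negP: (mismatch_lt_nlexle (mismatch_lt_cat t t mm)).
Qed.

Lemma lexle_flatten_lyndon_cat L Ms :
  lyndon L -> all (lexle^~ L) Ms -> lexle (flatten Ms) (L ++ flatten Ms).
Proof.
move=> lynL; elim: Ms => [|M Ms IH] //= /andP[ML /IH{}IH].
set Z := flatten Ms in IH *.
case: (lexle_prefix_or_mismatch ML) => [[t Lt]|mm]; last first.
  exact/mismatch_lt_lexle/mismatch_lt_cat.
rewrite {1}Lt -catA lexle_catl.
case: M Lt {ML} => [|x M] /= Lt; first by rewrite -Lt.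
case: t Lt => [|y t] Lt; first by rewrite cats0 in Lt; rewrite -cat_cons -Lt.
have mm : mismatch_lt L (y :: t).
  have -> : y :: t = drop (size (x :: M)) L by rewrite Lt -cat_cons drop_size_cat.
  by apply: lyndon_mismatch_drop; rewrite // Lt /= size_cat /=; lia.
exact/(lexle_trans IH)/mismatch_lt_lexle/mismatch_lt_cat.
Qed.

Lemma lexle_flatten_drop_lyndon gs hs c :
  all lyndon gs -> sorted (fun a b => lexle b a) (gs ++ hs) ->
  lexle (flatten hs) (drop c (flatten gs) ++ flatten hs).
Proof.
elim: gs c => [|g gs IH] c /=; first by rewrite lexle_refl.
move=> /andP[lyn_g lyn_gs] gs_sorted.
have le_g : all (lexle^~ g) (gs ++ hs).
  by apply: order_path_min gs_sorted => x y z xy yz; apply: lexle_trans yz xy.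
have := lexle_flatten_lyndon_cat lyn_g le_g; rewrite flatten_cat.
set F := flatten gs; set H := flatten hs => le_gF.
have le_F (c' : nat) : lexle H (drop c' F ++ H) by exact: IH (path_sorted gs_sorted).
rewrite drop_cat; case: ltnP => [cg|_]; last exact: le_F.
rewrite -catA; apply: lexle_trans (le_F 0%N) _; rewrite drop0.
apply: lexle_trans le_gF _; case: c cg => [|c] cg; first by rewrite drop0 lexle_refl.
exact/mismatch_lt_lexle/mismatch_lt_cat/lyndon_mismatch_drop.
Qed.

Lemma lexle_drop_catr U V a b :
  (forall c, lexle V (drop c U ++ V)) ->
  lexle (drop a U) (drop b U) -> lexle (drop a U ++ V) (drop b U ++ V).
Proof.
move=> V_min; set x := drop a U; set y := drop b U => xy.
case: (lexle_prefix_or_mismatch xy) => [[r yr]|mm]; last first.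
  exact/mismatch_lt_lexle/mismatch_lt_cat.
rewrite yr -catA lexle_catl.
have -> : r = drop (size x + b) U by rewrite -drop_drop -/y yr drop_size_cat.
exact: V_min.
Qed.

Lemma sorted_sort_suffixes_prefix U V :
  (forall c, lexle V (drop c U ++ V)) ->
  sorted (fun i j => lexle (drop i.-1 (U ++ V)) (drop j.-1 (U ++ V)))
         (sort_suffixes (U ++ V) 1 (size U)).
Proof.
move=> V_min; apply: (@sub_in_sorted _ (mem (iota 1 (size U)))); last first.
- by apply: sort_sorted => i j; apply: lexle_total.
- by apply/allP => i; rewrite mem_sort subSS subn0.
move=> i j; rewrite /= !mem_iota /subword take_size_cat // => iU jU.
by rewrite !drop_cat !ifT; [apply: lexle_drop_catr | lia..].
Qed.

Lemma perm_sort_suffixes_split W m : (m <= size W)%N ->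
  perm_eq (sort_suffixes W 1 (size W))
          (sort_suffixes W 1 m ++ sort_suffixes W m.+1 (size W)).
Proof.
move=> mW; rewrite /sort_suffixes perm_sort !subSS !subn0.
have -> : iota 1 (size W) = iota 1 m ++ iota m.+1 (size W - m).
  by rewrite -[m.+1]/(1 + m)%N -iotaD subnKC.
by apply: perm_cat; rewrite perm_sym perm_sort.
Qed.

End Lexicographic.

Theorem proposition1 (d : Order.disp_t) (T : finOrderType d)
    (W : seq T) (fs : seq (seq T)) (l : nat) :
  (0 < size W)%N ->
  lyndon_factorization W fs ->
  (1 <= l)%N -> (l < size fs)%N ->
  let n := size W in
  let m := size (flatten (take l fs)) in
  sort_suffixes W 1 n =
  merge (fun i j => lexle (subword W i n) (subword W j n))
        (sort_suffixes W 1 m) (sort_suffixes W m.+1 n).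
Proof.
move=> _ [flat_fs lyn_fs dec_fs] _ _ n m.
set U := flatten (take l fs); set V := flatten (drop l fs).
have W_UV : W = U ++ V by rewrite -flatten_cat cat_take_drop.
have V_min c : lexle V (drop c U ++ V).
  apply: lexle_flatten_drop_lyndon.
    by apply/allP => L /mem_take; apply: (allP lyn_fs).
  by rewrite cat_take_drop; apply/(sortedP [::]) => j; apply: dec_fs.
set R := fun i j => lexle (subword W i n) (subword W j n).
have R_total : total R by move=> i j; apply: lexle_total.
apply: (@sorted_eq_in _ R).
- by move=> ? ? ? _ _ _; apply: lexle_trans.
- move=> i j; rewrite !mem_sort !mem_iota /R /n /subword take_size => iW jW /andP[ij ji].
  by have := congr1 size (lexle_anti ij ji); rewrite !size_drop; lia.
- exact: sort_sorted.
- apply: merge_sorted => //; last exact: sort_sorted.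
  by rewrite /R /n /subword take_size W_UV; apply: sorted_sort_suffixes_prefix.
- rewrite perm_sym perm_merge perm_sym; apply: perm_sort_suffixes_split.
  by rewrite W_UV size_cat leq_addr.
Qed.
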